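(* Let $\Lambda$ be a ring and $\Gamma$ a (not necessarily unital) subring of $\Lambda$ such that $\Lambda=\Gamma\oplus J(\Lambda)$ as additive groups, where $J(\Lambda)$ is the Jacobson radical of $\Lambda$. Then every central idempotent of $\Lambda$ lies in $\Gamma$. *)

From HB Require Import structures.
From mathcomp Require Import all_boot all_order all_algebra.
Set Implicit Arguments. Unset Strict Implicit. Unset Printing Implicit Defensive.
Import GRing.Theory.
Local Open Scope ring_scope.

Definition left_ideal (R : nzRingType) (I : R -> Prop) : Prop :=
  I 0 /\ (forall x y, I x -> I y -> I (x - y)) /\ (forall r x, I x -> I (r * x)).

Definition maximal_left_ideal (R : nzRingType) (I : R -> Prop) : Prop :=
  left_ideal I /\ ~ I 1 /\
  (forall K : R -> Prop, left_ideal K -> ~ K 1 -> (forall x, I x -> K x) ->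
     forall x, K x -> I x).

Definition jacobson (R : nzRingType) (x : R) : Prop :=
  forall I : R -> Prop, maximal_left_ideal I -> I x.

Definition subring_nu (R : nzRingType) (G : R -> Prop) : Prop :=
  G 0 /\ (forall x y, G x -> G y -> G (x - y)) /\ (forall x y, G x -> G y -> G (x * y)).

Definition direct_sum_with_jacobson (R : nzRingType) (G : R -> Prop) : Prop :=
  (forall x : R, exists g j, G g /\ jacobson j /\ x = g + j) /\
  (forall x : R, G x -> jacobson x -> x = 0).

Definition central_idempotent (R : nzRingType) (e : R) : Prop :=
  e * e = e /\ forall x : R, e * x = x * e.

From HB Require Import structures.
From mathcomp Require Import all_boot all_order all_algebra.
From mathcomp Require Import boolp classical_sets.
Import GRing.Theory.

Set Implicit Arguments.
Unset Strict Implicit.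
Unset Printing Implicit Defensive.

(* Write e = g + j with g in Gamma and j in J.  Since J is a left ideal and e
   is a central idempotent, g^2 - g = (1 - e - g) j lies in J and in Gamma, so
   g is idempotent.  Then e (1 - g) = e j and (1 - e) g = - g j are idempotents
   lying in J, hence vanish: a nonzero idempotent u in J is impossible, because
   a maximal left ideal containing R (1 - u) (Zorn) would contain both u and
   1 - u.  So e = e g = g. *)

Local Open Scope ring_scope.
Local Open Scope classical_set_scope.

Lemma left_idealN (R : nzRingType) (I : R -> Prop) (x : R) :
  left_ideal I -> I x -> I (- x).
Proof. by move=> [I0 [IB _]] Ix; rewrite -sub0r; apply: IB. Qed.

Lemma left_ideal_jacobson (R : nzRingType) : left_ideal (@jacobson R).
Proof.
split; first by move=> I [[I0 _] _].
split.
  move=> x y Jx Jy I MI; have [[_ [IB _]] _] := MI.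
  by apply: IB; [apply: Jx | apply: Jy].
by move=> r x Jx I MI; have [[_ [_ IM]] _] := MI; apply: IM; apply: Jx.
Qed.

Section MaximalLeftIdeal.
Variables (R : nzRingType) (I : set R).
Hypotheses (I_ideal : left_ideal I) (I_proper : ~ I 1).

(* Zorn's lemma is applied to the sets K such that I `|` K is a proper left
   ideal, so that the empty chain (whose union is set0) is harmless. *)
Let extends_ideal (K : set R) := left_ideal (I `|` K) /\ ~ (I `|` K) 1.

Let extends_ideal_bigcup (F : set (set R)) :
  F `<=` extends_ideal -> total_on F subset ->
  extends_ideal (\bigcup_(X in F) X).
Proof.
move=> F_ext F_chain; set U := \bigcup_(X in F) X.
have common x y : (I `|` U) x -> (I `|` U) y ->
    exists2 Y, extends_ideal Y /\ Y `<=` U & (I `|` Y) x /\ (I `|` Y) y.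
  have inF X : F X -> extends_ideal X /\ X `<=` U.
    by move=> FX; split; [exact: F_ext | exact: bigcup_sup].
  case=> [Ix | [X FX Xx]] [Iy | [Y FY Yy]].
  - by exists set0; [rewrite /extends_ideal setU0; split=> // ? | split; left].
  - by exists Y; [exact: inF | split; [left | right]].
  - by exists X; [exact: inF | split; [right | left]].
  - have [XY | YX] := F_chain X Y FX FY.
    + by exists Y; [exact: inF | split; right; [apply: XY |]].
    + by exists X; [exact: inF | split; right; [| apply: YX]].
have U_sup Y : Y `<=` U -> I `|` Y `<=` I `|` U by exact: setUS.
split; last by move=> U1; have [Y [[_ Y1] _] [/Y1 //]] := common 1 1 U1 U1.
split; first by left; case: I_ideal.
split.
  move=> x y Ux Uy; have [Y [[[_ [YB _]] _] YU] [Yx Yy]] := common x y Ux Uy.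
  by apply: U_sup YU _ (YB _ _ Yx Yy).
move=> r x Ux; have [Y [[[_ [_ YM]] _] YU] [Yx _]] := common x x Ux Ux.
by apply: U_sup YU _ (YM r _ Yx).
Qed.

Lemma exists_maximal_left_ideal : exists2 M, maximal_left_ideal M & I `<=` M.
Proof.
have [A [[A_ideal A_proper] A_max]] := Zorn_bigcup extends_ideal_bigcup.
exists (I `|` A); last by move=> x Ix; left.
split; first exact: A_ideal.
split; first exact: A_proper.
move=> K K_ideal K_proper IAK x Kx; apply: contrapT => IAx.
have IK : I `<=` K by move=> z Iz; apply: IAK; left.
apply: (A_max K); last by rewrite /extends_ideal setUidr.
by split=> [z Az | KA]; [apply: IAK; right | apply: IAx; right; apply: KA].
Qed.

End MaximalLeftIdeal.

Lemma jacobson_idempotent_eq0 (R : nzRingType) (u : R) :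
  jacobson u -> u * u = u -> u = 0.
Proof.
move=> Ju uu; apply: contrapT => /eqP u_neq0.
pose I : set R := fun x => exists r, x = r * (1 - u).
have I_ideal : left_ideal I.
  split; first by exists 0; rewrite mul0r.
  split; first by move=> _ _ [r ->] [s ->]; exists (r - s); rewrite mulrBl.
  by move=> r _ [s ->]; exists (r * s); rewrite mulrA.
have I_proper : ~ I 1.
  move=> [r r1]; move/eqP: u_neq0; apply.
  by rewrite -[u]mul1r r1 -mulrA mulrBl mul1r uu subrr mulr0.
have [M M_max IM] := exists_maximal_left_ideal I_ideal I_proper.
have [M_ideal [M_proper _]] := M_max; have [_ [MB _]] := M_ideal.
apply: M_proper; rewrite -(subrK u 1) -[X in _ + X]opprK.
apply: MB; first by apply: IM; exists 1; rewrite mul1r.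
exact: left_idealN M_ideal (Ju M M_max).
Qed.

Lemma idempotent1B (R : nzRingType) (u : R) :
  u * u = u -> (1 - u) * (1 - u) = 1 - u.
Proof. by move=> uu; rewrite mulrBl mul1r mulrBr mulr1 uu subrr subr0. Qed.

Lemma idempotentM_comm (R : nzRingType) (u v : R) :
  u * u = u -> v * v = v -> u * v = v * u -> (u * v) * (u * v) = u * v.
Proof.
by move=> uu vv uv; rewrite mulrA -[u * v * u]mulrA -uv mulrA uu -mulrA vv.
Qed.

Section CentralIdempotentLift.
Variables (R : nzRingType) (e g : R).
Hypotheses (e_central : central_idempotent e) (Jeg : jacobson (e - g)).

Lemma jacobson_idempotent_defect : jacobson (g * g - g).
Proof.
have [ee ec] := e_central; have [_ [_ JM]] := left_ideal_jacobson R.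
suff -> : g * g - g = (1 - e - g) * (e - g) by apply: JM.
rewrite !mulrBl !mulrBr !mul1r ee ec.
by rewrite opprB addrA addrAC (addrC e) addrK opprB addrA addrAC addrK addrC.
Qed.

Lemma central_idempotent_eq (gg : g * g = g) : e = g.
Proof.
have [ee ec] := e_central; have J_ideal := left_ideal_jacobson R.
have [_ [_ JM]] := J_ideal.
have e_mul1Bg : e * (1 - g) = 0.
  apply: jacobson_idempotent_eq0.
    by rewrite mulrBr mulr1 -{1}ee -mulrBr; apply: JM.
  exact: idempotentM_comm ee (idempotent1B gg) (ec _).
have mul1Be_g : (1 - e) * g = 0.
  apply: jacobson_idempotent_eq0.
    rewrite mulrBl mul1r ec -{1}gg -mulrBr -opprB mulrN.
    by apply: left_idealN J_ideal _; apply: JM.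
  apply: idempotentM_comm (idempotent1B ee) gg _.
  by rewrite mulrBl mulrBr mul1r mulr1 ec.
have e_eq : e = e * g by apply/eqP; rewrite -subr_eq0 -e_mul1Bg mulrBr mulr1.
have g_eq : g = e * g by apply/eqP; rewrite -subr_eq0 -mul1Be_g mulrBl mul1r.
by rewrite e_eq -g_eq.
Qed.

End CentralIdempotentLift.

Theorem lemma5p2 (R : nzRingType) (G : R -> Prop) :
  subring_nu G -> direct_sum_with_jacobson G ->
  forall e : R, central_idempotent e -> G e.
Proof.
move=> [_ [GB GM]] [G_decomp G_cap_J] e e_central.
have [g [j [Gg [Jj e_def]]]] := G_decomp e.
have Jeg : jacobson (e - g) by rewrite e_def addrC addKr.
have gg : g * g = g.
  apply/eqP; rewrite -subr_eq0; apply/eqP; apply: G_cap_J.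
    by apply: GB (GM _ _ Gg Gg) Gg.
  exact: jacobson_idempotent_defect e_central Jeg.
by rewrite (central_idempotent_eq e_central Jeg gg).
Qed.
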